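(* Let $(x,y)$ be a vertex of the convex hull of the set of feasible solutions of a CKFLU instance with $m=|D|$ clients. Let $G=(V,E)$ be its associated bipartite graph and $H=(\bar V,\bar E)$ its untight subgraph. Then: (a) $G$ is acyclic; (b) each connected component of $H$ contains at most one facility $i\in F\cap\bar V$ with $0<\sum_{j\in D}x_{ij}<s$; (c) $H$ contains at most $m$ facilities and at most $2m-1$ edges.
   Context: An instance of the capacitated $k$-facility location problem with uniform capacities (CKFLU) consists of a finite set $F$ of facilities with opening costs $f_i\ge 0$, a finite set $D$ of clients with integer demands $d_j\ge 0$, unit service costs $c_{ij}\ge 0$ ($i\in F$, $j\in D$), a common positive integer capacity $s$, and an integer $k\ge1$. A feasible solution is $(x,y)$ with $x_{ij}\ge 0$, $y\in\{0,1\}^F$, $\sum_{i\in F}x_{ij}=d_j$ for all $j\in D$, $\sum_{j\in D}x_{ij}\le s\,y_i$ for all $i\in F$, and $\sum_{i\in F}y_i\le k$. For a feasible solution $(x,y)$, its associated bipartite graph is $G=(V,E)$ with $V=\{i\in F: y_i=1\}\cup D$ and $E=\{\{i,j\}: i\in F,\ j\in D,\ x_{ij}>0\}$, edge $\{i,j\}$ having weight $x_{ij}$. Its untight subgraph is $H=(\bar V,\bar E)$ where $\bar E=\{\{i,j\}\in E: 0<x_{ij}<s\}$ and $\bar V=\bigcup_{e\in\bar E}e$. *)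

From HB Require Import structures.
From mathcomp Require Import all_boot all_order all_algebra.
Set Implicit Arguments. Unset Strict Implicit. Unset Printing Implicit Defensive.
Import Order.TTheory GRing.Theory Num.Theory.
Local Open Scope ring_scope.

Section CKFLU.
Variables (R : realFieldType) (F D : finType).

Definition ckflu_feasible (d : D -> nat) (s k : nat)
    (x : F -> D -> R) (y : F -> R) : Prop :=
  [/\ (forall i j, 0 <= x i j),
      (forall i, y i = 0 \/ y i = 1),
      (forall j, \sum_(i : F) x i j = (d j)%:R),
      (forall i, \sum_(j : D) x i j <= s%:R * y i)
    & \sum_(i : F) y i <= k%:R].

Definition in_conv_hull (P : (F -> D -> R) -> (F -> R) -> Prop)
    (x : F -> D -> R) (y : F -> R) : Prop :=
  exists (n : nat) (w : 'I_n -> R) (X : 'I_n -> F -> D -> R) (Y : 'I_n -> F -> R),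
    [/\ (forall l, 0 <= w l),
        \sum_(l < n) w l = 1,
        (forall l, P (X l) (Y l)),
        (forall i j, x i j = \sum_(l < n) w l * X l i j)
      & (forall i, y i = \sum_(l < n) w l * Y l i)].

Definition is_vertex_conv_hull (P : (F -> D -> R) -> (F -> R) -> Prop)
    (x : F -> D -> R) (y : F -> R) : Prop :=
  in_conv_hull P x y /\
  forall (x1 x2 : F -> D -> R) (y1 y2 : F -> R) (t : R),
    in_conv_hull P x1 y1 -> in_conv_hull P x2 y2 -> 0 < t < 1 ->
    (forall i j, x i j = t * x1 i j + (1 - t) * x2 i j) ->
    (forall i, y i = t * y1 i + (1 - t) * y2 i) ->
    (forall i j, x1 i j = x2 i j) /\ (forall i, y1 i = y2 i).

(* Vertices of the graphs are facilities (inl) and clients (inr). *)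

Definition assoc_edge (x : F -> D -> R) (y : F -> R) : rel (F + D) :=
  fun u v => match u, v with
  | inl i, inr j => (y i == 1) && (0 < x i j)
  | inr j, inl i => (y i == 1) && (0 < x i j)
  | _, _ => false
  end.

Definition untight_edge (s : nat) (x : F -> D -> R) : rel (F + D) :=
  fun u v => match u, v with
  | inl i, inr j => (0 < x i j < s%:R)
  | inr j, inl i => (0 < x i j < s%:R)
  | _, _ => false
  end.

Definition acyclic (T : eqType) (e : rel T) : Prop :=
  forall c : seq T, uniq c -> (2 < size c)%N -> ~~ cycle e c.

(* Facilities in V-bar (incident to an untight edge). *)
Definition untight_facility (s : nat) (x : F -> D -> R) (i : F) : bool :=
  [exists j : D, 0 < x i j < s%:R].

End CKFLU.

From HB Require Import structures.
From mathcomp Require Import all_boot all_order all_algebra.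
From mathcomp Require Import ring lra zify.
Set Implicit Arguments. Unset Strict Implicit. Unset Printing Implicit Defensive.
Import Order.TTheory GRing.Theory Num.Theory.
Local Open Scope ring_scope.

(* Everything rests on one rigidity property of a vertex (x, y) of the convex
   hull of the feasible solutions ([vertex_rigid]): call z a feasible
   direction if it is supported on edges with x_ij > 0, keeps every demand
   (zero column sums) and changes only the loads of facilities with spare
   capacity.  Then x + eps z and x - eps z are feasible for a small eps > 0,
   and as (x, y) is their midpoint, z = 0.
   (a), (b): along a walk of the bipartite graph the alternating +1/-1
   indicator [alt_walk] telescopes, so a cycle of G, or a walk in H between
   two distinct facilities with spare capacity, would give a nonzero feasible
   direction.
   (c): each facility of H has an edge in H and each full one has two, so
   |U| + |Full| <= |E| ([untight_degree_bound]); and a direction supported on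
   the edges E of H is determined by the |D| demands and the loads of all
   full facilities but a well-chosen one, so by a dimension count
   ([card_le_functionals]) |E| <= |D| + |Full| - [that facility is full]. *)

Lemma ler_sum_term (R : numDomainType) (I : finType) (G : I -> R) (a : I) :
  (forall i, 0 <= G i) -> G a <= \sum_i G i.
Proof. by move=> G_ge0; rewrite (bigD1 a) //= lerDl sumr_ge0. Qed.

Section ConvexHull.
Variables (R : realFieldType) (F D : finType).
Implicit Types (P : (F -> D -> R) -> (F -> R) -> Prop) (x : F -> D -> R) (y : F -> R).

(* [P] only depends on the values of [x] and [y] (no function extensionality
   is needed to transport membership). *)
Definition pointwise_closed P :=
  forall x x' y y', (forall i j, x i j = x' i j) -> (forall i, y i = y' i) ->
  P x' y' -> P x y.

Lemma in_conv_hull_self P x y : P x y -> in_conv_hull P x y.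
Proof.
move=> Pxy; exists 1%N, (fun _ => 1), (fun _ => x), (fun _ => y).
by split=> [//|||i j|i]; rewrite ?big_ord1 ?mul1r.
Qed.

Lemma conv_hull_split P x y : in_conv_hull P x y ->
  exists x1 y1 x2 y2 (t : R), [/\ P x1 y1, in_conv_hull P x2 y2, 0 < t < 1,
    (forall i j, x i j = t * x1 i j + (1 - t) * x2 i j) &
    (forall i, y i = t * y1 i + (1 - t) * y2 i)].
Proof.
move=> [n [w [X [Y [w_ge0 w_sum1 PX hx hy]]]]].
have [l /andP[_ wl_gt0]] : exists l, true && (0 < w l).
  by apply: psumr_neq0P => [l _|]; rewrite ?w_ge0 // w_sum1; apply/eqP; rewrite oner_eq0.
have wl_le1 : w l <= 1 by rewrite -w_sum1 ler_sum_term.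
(* Split off half of the weight of [l]; the rest, rescaled, stays in the hull. *)
pose t := w l / 2.
have t_gt0 : 0 < t by rewrite /t; lra.
have t_lt1 : t < 1 by rewrite /t; lra.
have t_neq1 : 1 - t != 0 by rewrite subr_eq0 eq_sym lt_eqF.
pose w' k := (w k - t * (k == l)%:R) / (1 - t).
have recombine (G : 'I_n -> R) :
    \sum_k w k * G k = t * G l + (1 - t) * \sum_k w' k * G k.
  have -> : (1 - t) * \sum_k w' k * G k =
            \sum_k (w k * G k - t * ((k == l)%:R * G k)).
    by rewrite mulr_sumr; apply: eq_bigr => k _; rewrite /w'; field.
  have pick_l : \sum_k (k == l)%:R * G k = G l.
    by rewrite (bigD1 l) //= eqxx mul1r big1 ?addr0 // => k /negbTE ->; rewrite mul0r.
  by rewrite sumrB -mulr_sumr pick_l; ring.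
exists (X l), (Y l), (fun i j => \sum_k w' k * X k i j), (fun i => \sum_k w' k * Y k i), t.
split=> // [||i j|i]; rewrite ?t_gt0 ?hx ?hy ?recombine //.
exists n, w', X, Y; split=> //.
- move=> k; apply: divr_ge0; last by rewrite subr_ge0 ltW.
  by have := w_ge0 k; case: eqP => [->|_]; rewrite /t /=; lra.
- have := recombine (fun=> 1); rewrite !(eq_bigr _ (fun k _ => mulr1 _)) w_sum1.
  set S := \sum_k w' k => h; apply: (mulfI t_neq1); rewrite mulr1; lra.
Qed.

Lemma vertex_in_set P x y :
  pointwise_closed P -> is_vertex_conv_hull P x y -> P x y.
Proof.
move=> P_closed [/conv_hull_split [x1 [y1 [x2 [y2 [t [P1 hull2 t01 ex ey]]]]]] extreme].
have [e1 e2] := extreme _ _ _ _ _ (in_conv_hull_self P1) hull2 t01 ex ey.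
by apply: (P_closed _ x1 _ y1) P1 => [i j|i]; rewrite ?ex ?ey -?e1 -?e2; ring.
Qed.

End ConvexHull.

Section SmallStep.
Variables (R : realFieldType) (T : finType).

Lemma small_step (a b : T -> R) :
  (forall t, a t != 0 -> 0 < b t) ->
  exists2 eps : R, 0 < eps & forall t, a t != 0 -> eps * `|a t| <= b t.
Proof.
move=> b_pos; pose K : R := 1 + \sum_t `|a t| / `|b t|.
have ratio_ge0 t : 0 <= `|a t| / `|b t| by rewrite divr_ge0.
have ratio_le t : `|a t| / `|b t| <= K.
  by have := ler_sum_term (G := fun t => `|a t| / `|b t|) t ratio_ge0; rewrite /K; lra.
have K_gt0 : 0 < K by rewrite /K (lt_le_trans ltr01) // lerDl sumr_ge0.
exists K^-1 => [|t a_neq0]; first by rewrite invr_gt0.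
have b_gt0 := b_pos t a_neq0.
move: (ratio_le t); rewrite (gtr0_norm b_gt0) ler_pdivrMr // => a_le.
by rewrite mulrC ler_pdivrMr // mulrC.
Qed.

End SmallStep.

Section DimensionBound.
Variable R : fieldType.

(* If the only vector supported on [A] that is annihilated by the functionals
   [K _ b], [b \in C], is zero, then [#|A| <= #|C|]: the matrix of these
   functionals restricted to [A] has full row rank. *)
Lemma card_le_functionals (T B : finType) (A : {set T}) (C : {set B})
    (K : T -> B -> R) :
  (forall z : T -> R, (forall t, t \notin A -> z t = 0) ->
     (forall b, b \in C -> \sum_t z t * K t b = 0) -> forall t, z t = 0) ->
  (#|A| <= #|C|)%N.
Proof.
move=> only_zero.
pose M := \matrix_(a < #|A|, c < #|C|) K (enum_val a) (enum_val c).
suff /eqP <- : row_free M by apply: rank_leq_col.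
apply/inj_row_free => v vM0.
pose z t := \sum_(a < #|A|) (enum_val a == t)%:R * v 0 a.
have z_enum a : z (enum_val a) = v 0 a.
  rewrite /z (bigD1 a) //= eqxx mul1r big1 ?addr0 // => a' a'_neq_a.
  by rewrite (inj_eq enum_val_inj) (negbTE a'_neq_a) mul0r.
have z_apply (G : T -> R) : \sum_t z t * G t = \sum_(a < #|A|) v 0 a * G (enum_val a).
  under eq_bigr do rewrite mulr_suml.
  rewrite exchange_big /=; apply: eq_bigr => a _.
  rewrite (bigD1 (enum_val a)) //= eqxx mul1r big1 ?addr0 // => t.
  by rewrite eq_sym => /negbTE ->; rewrite !mul0r.
have z0 : forall t, z t = 0.
  apply: only_zero => [t t_notin|b b_in].
    rewrite /z big1 // => a _; case: eqP => [a_t|]; last by rewrite mul0r.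
    by move: t_notin; rewrite -a_t enum_valP.
  move/matrixP/(_ 0 (enum_rank_in b_in b)): vM0.
  rewrite !mxE z_apply => vMb; rewrite -[RHS]vMb.
  by apply: eq_bigr => a _; rewrite mxE enum_rankK_in.
by apply/rowP => a; rewrite mxE -z_enum z0.
Qed.

End DimensionBound.

Section PairSums.
Variables (R : realFieldType) (F D : finType) (z : F * D -> R).

Lemma sum_pairs (G : F * D -> R) : \sum_p G p = \sum_i \sum_j G (i, j).
Proof. by rewrite pair_bigA; apply: eq_bigr => -[]. Qed.

Lemma sum_pairs_row i : \sum_p z p * (p.1 == i)%:R = \sum_j z (i, j).
Proof.
rewrite sum_pairs (bigD1 i) //= [X in _ + X]big1 ?addr0.
  by apply: eq_bigr => j _; rewrite eqxx mulr1.
by move=> i' /negbTE i'_neq_i; rewrite big1 // => j _ /=; rewrite i'_neq_i mulr0.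
Qed.

Lemma sum_pairs_col j : \sum_p z p * (p.2 == j)%:R = \sum_i z (i, j).
Proof.
rewrite sum_pairs; apply: eq_bigr => i _.
by rewrite (bigD1 j) //= eqxx mulr1 big1 ?addr0 // => j' /negbTE /= ->; rewrite mulr0.
Qed.

End PairSums.

Section Perturbation.
Variables (R : realFieldType) (F D : finType) (d : D -> nat) (s k : nat).
Implicit Types (x z : F -> D -> R) (y : F -> R).

Local Notation feasible := (@ckflu_feasible R F D d s k).

Lemma feasible_pointwise_closed : pointwise_closed feasible.
Proof.
move=> x x' y y' ex ey [x_ge0 y_bin demand cap open_le].
have sum_x i : \sum_j x i j = \sum_j x' i j by apply: eq_bigr => j _.
split=> [i j|i|j|i|]; rewrite ?ex ?ey ?sum_x //.
- by rewrite -(demand j); apply: eq_bigr => i _.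
- by rewrite (eq_bigr _ (fun i _ => ey i)).
Qed.

Lemma vertex_feasible x y : is_vertex_conv_hull feasible x y -> feasible x y.
Proof. exact: vertex_in_set feasible_pointwise_closed. Qed.

Lemma feasible_load_le x y i : feasible x y -> \sum_j x i j <= s%:R.
Proof.
move=> [_ y_bin _ cap _]; apply: le_trans (cap i) _.
by case: (y_bin i) => ->; rewrite ?mulr0 ?mulr1 ?ler0n.
Qed.

(* A direction [z] along which a feasible [x] can move both ways (keeping [y]):
   it only uses edges carrying flow, preserves every client's demand, and
   changes only the loads of facilities with spare capacity. *)
Definition feasible_direction x z :=
  [/\ (forall i j, z i j != 0 -> 0 < x i j),
      (forall j, \sum_i z i j = 0)
    & (forall i, \sum_j z i j != 0 -> \sum_j x i j < s%:R)].

Lemma perturbed_feasible x y z (del : R) :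
  feasible x y ->
  (forall i j, `|del * z i j| <= x i j) ->
  (forall j, \sum_i z i j = 0) ->
  (forall i, `|del * \sum_j z i j| <= s%:R - \sum_j x i j) ->
  feasible (fun i j => x i j + del * z i j) y.
Proof.
move=> [x_ge0 y_bin demand cap open_le] step_le z_col step_row_le.
split=> // [i j|j|i].
- by have := step_le i j; rewrite ler_norml; lra.
- by rewrite big_split /= -mulr_sumr z_col mulr0 addr0.
rewrite big_split /= -mulr_sumr.
case: (y_bin i) => y_i; last by have := step_row_le i; rewrite y_i mulr1 ler_norml; lra.
have row_le : del * \sum_j z i j <= \sum_j x i j.
  rewrite mulr_sumr; apply: ler_sum => j _.
  by apply: le_trans (step_le i j); rewrite ler_norm.
by have := cap i; rewrite y_i mulr0; lra.
Qed.

(* Key rigidity property of a vertex: it admits no nonzero feasible direction,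
   since otherwise it is the midpoint of [x + eps z] and [x - eps z]. *)
Lemma vertex_rigid x y z :
  is_vertex_conv_hull feasible x y -> feasible_direction x z ->
  forall i j, z i j = 0.
Proof.
move=> vertex [z_supp z_col z_row].
have xy_feas := vertex_feasible vertex; have [x_ge0 _ _ _ _] := xy_feas.
have [eps1 eps1_gt0 step1] :=
  small_step (a := fun p : F * D => z p.1 p.2) (fun p => z_supp p.1 p.2).
have slack i : \sum_j z i j != 0 -> 0 < s%:R - \sum_j x i j.
  by move=> /z_row; rewrite subr_gt0.
have [eps2 eps2_gt0 step2] := small_step slack.
pose eps := Num.min eps1 eps2.
have eps_gt0 : 0 < eps by rewrite lt_min eps1_gt0.
have step_feasible (del : R) : `|del| = eps -> feasible (fun i j => x i j + del * z i j) y.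
  move=> del_norm; apply: perturbed_feasible => // [i j|i].
  - rewrite normrM del_norm; have [->|z_neq0] := eqVneq (z i j) 0.
      by rewrite normr0 mulr0.
    by apply: le_trans (step1 (i, j) z_neq0); rewrite ler_wpM2r // ge_min lexx.
  - have [->|z_neq0] := eqVneq (\sum_j z i j) 0.
      by rewrite mulr0 normr0 subr_ge0 (feasible_load_le _ xy_feas).
    rewrite normrM del_norm; apply: le_trans (step2 i z_neq0).
    by rewrite ler_wpM2r // ge_min lexx orbT.
have norm_eps : `|eps| = eps by rewrite gtr0_norm.
have norm_neps : `|- eps| = eps by rewrite normrN.
have [_ extreme] := vertex.
have [eq_shift _] := extreme _ _ _ _ (1 / 2)
  (in_conv_hull_self (step_feasible _ norm_eps))
  (in_conv_hull_self (step_feasible _ norm_neps))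
  ltac:(lra) (fun i j => ltac:(rewrite /=; lra)) (fun i => ltac:(lra)).
move=> i j; have /= shift := eq_shift i j.
have : eps * z i j = 0 by lra.
by move/eqP; rewrite mulf_eq0 (gt_eqF eps_gt0) => /eqP.
Qed.

End Perturbation.

Section AlternatingWalks.
Variables (R : realFieldType) (F D : finType).
Implicit Types (e : rel (F + D)) (u v w : F + D) (p : seq (F + D)).

Definition side u : bool := if u is inl _ then true else false.

Definition bipartite e := forall u w, e u w -> side w = ~~ side u.

Definition joins u w (i : F) (j : D) : bool :=
  match u, w with
  | inl a, inr b | inr b, inl a => (a == i) && (b == j)
  | _, _ => false
  end.

(* Signed indicator of the walk [u :: p]: its edges get weights +1, -1, +1, ...
   (summed when an edge is traversed several times). *)
Fixpoint alt_walk u p : F -> D -> R :=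
  if p is w :: p' then fun i j => (joins u w i j)%:R - alt_walk w p' i j
  else fun _ _ => 0.

Lemma path_side e u p : bipartite e -> path e u p ->
  side (last u p) = side u (+) odd (size p).
Proof.
move=> e_bip; elim: p u => [|w p IHp] u /=; first by rewrite addbF.
by move=> /andP[e_uw /IHp ->]; rewrite (e_bip _ _ e_uw); case: (side u); case: (odd _).
Qed.

Lemma walk_sign e u p : bipartite e -> path e u p ->
  side (last u p) = side u -> (-1) ^+ size p = 1 :> R.
Proof.
move=> e_bip walk; rewrite (path_side e_bip walk) -signr_odd.
by case: (side u); case: (odd _).
Qed.

Lemma sum_pick (T : finType) (P : bool) (b : T) :
  \sum_t ((P && (b == t))%:R : R) = P%:R.
Proof.
rewrite (bigD1 b) //= eqxx andbT big1 ?addr0 // => t.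
by rewrite eq_sym => /negbTE ->; rewrite andbF.
Qed.

Lemma joins_sum_clients u w i : side w = ~~ side u ->
  \sum_j ((joins u w i j)%:R : R) = (u == inl i)%:R + (w == inl i)%:R.
Proof. by case: u => [a|b]; case: w => [a'|b'] //= _; rewrite sum_pick ?addr0 ?add0r. Qed.

Lemma joins_sum_facilities u w j : side w = ~~ side u ->
  \sum_i ((joins u w i j)%:R : R) = (u == inr j)%:R + (w == inr j)%:R.
Proof.
case: u => [a|b]; case: w => [a'|b'] //= _;
  by under eq_bigr => i _ do rewrite andbC; rewrite sum_pick ?addr0 ?add0r.
Qed.

(* Telescoping: inner vertices of the walk contribute +1 - 1 = 0, so only the
   two endpoints appear in the load and demand of [alt_walk]. *)
Lemma alt_walk_rowsum e u p i : bipartite e -> path e u p ->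
  \sum_j alt_walk u p i j = (u == inl i)%:R - (-1) ^+ size p * (last u p == inl i)%:R.
Proof.
move=> e_bip; elim: p u => [|w p IHp] u /=; first by rewrite big1 // expr0 mul1r subrr.
move=> /andP[e_uw walk]; rewrite sumrB joins_sum_clients ?(e_bip _ _ e_uw) //.
by rewrite IHp // exprS; ring.
Qed.

Lemma alt_walk_colsum e u p j : bipartite e -> path e u p ->
  \sum_i alt_walk u p i j = (u == inr j)%:R - (-1) ^+ size p * (last u p == inr j)%:R.
Proof.
move=> e_bip; elim: p u => [|w p IHp] u /=; first by rewrite big1 // expr0 mul1r subrr.
move=> /andP[e_uw walk]; rewrite sumrB joins_sum_facilities ?(e_bip _ _ e_uw) //.
by rewrite IHp // exprS; ring.
Qed.

Lemma alt_walk_support e u p i j : path e u p -> alt_walk u p i j != 0 ->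
  exists a b, e a b /\ joins a b i j.
Proof.
elim: p u => [|w p IHp] u /=; first by rewrite eqxx.
move=> /andP[e_uw walk]; have [|_] := boolP (joins u w i j); first by exists u, w.
by rewrite sub0r oppr_eq0; apply: IHp.
Qed.

Lemma joins_exists u w : side w = ~~ side u -> exists i j, joins u w i j.
Proof.
by case: u => [a|b]; case: w => [a'|b'] //= _; [exists a, b' | exists a', b]; rewrite /= !eqxx.
Qed.

Lemma joinsC u w i j : joins u w i j = joins w u i j.
Proof. by case: u; case: w. Qed.

Lemma joins_endpoint u w a b i j : joins u w i j -> joins a b i j -> a = u \/ a = w.
Proof.
case: u => [u|u]; case: w => [w|w]; case: a => [a|a]; case: b => [b|b] //=;
  by move=> /andP[/eqP ? /eqP ?] /andP[/eqP ? /eqP ?]; subst; first [by left | by right].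
Qed.

Lemma alt_walk_vanish u p i j :
  (forall v w, v \in belast u p -> ~~ joins v w i j) -> alt_walk u p i j = 0.
Proof.
elim: p u => [|w p IHp] u //= avoid.
rewrite (negbTE (avoid _ _ (mem_head _ _))) IHp ?subr0 // => v v' v_in.
by apply: avoid; rewrite inE v_in orbT.
Qed.

Definition carries_flow e (x : F -> D -> R) :=
  forall u w i j, e u w -> joins u w i j -> 0 < x i j.

Lemma alt_walk_supported e x u p : carries_flow e x -> path e u p ->
  forall i j, alt_walk u p i j != 0 -> 0 < x i j.
Proof. by move=> flow walk i j /(alt_walk_support walk) [a [b [/flow]]]; apply. Qed.

Lemma closed_walk_direction (s : nat) e x u p :
  bipartite e -> carries_flow e x -> path e u p -> last u p = u ->
  feasible_direction s x (alt_walk u p).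
Proof.
move=> e_bip flow walk closed; have sign := walk_sign e_bip walk (congr1 side closed).
split=> [|j|i]; first exact: alt_walk_supported flow walk.
  by rewrite (alt_walk_colsum _ e_bip walk) sign closed mul1r subrr.
by rewrite (alt_walk_rowsum _ e_bip walk) sign closed mul1r subrr eqxx.
Qed.

Lemma facility_walk_rowsum e i1 i2 p i : bipartite e ->
  path e (inl i1) p -> last (inl i1) p = inl i2 ->
  \sum_j alt_walk (inl i1) p i j = (i1 == i)%:R - (i2 == i)%:R.
Proof.
move=> e_bip walk ends; have sign := walk_sign e_bip walk (congr1 side ends).
by rewrite (alt_walk_rowsum _ e_bip walk) sign ends mul1r !(inj_eq inl_inj).
Qed.

Lemma facility_walk_direction (s : nat) e x i1 i2 p :
  bipartite e -> carries_flow e x -> path e (inl i1) p -> last (inl i1) p = inl i2 ->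
  \sum_j x i1 j < s%:R -> \sum_j x i2 j < s%:R ->
  feasible_direction s x (alt_walk (inl i1) p).
Proof.
move=> e_bip flow walk ends slack1 slack2.
split=> [|j|i]; first exact: alt_walk_supported flow walk.
  by rewrite (alt_walk_colsum _ e_bip walk) ends mulr0 subrr.
rewrite (facility_walk_rowsum _ e_bip walk ends).
have [<-|_] := eqVneq i1 i; first by move=> _.
by have [<-|_] := eqVneq i2 i; rewrite ?subrr ?eqxx.
Qed.

End AlternatingWalks.

Section VertexStructure.
Variables (R : realFieldType) (F D : finType) (d : D -> nat) (s k : nat).
Variables (x : F -> D -> R) (y : F -> R).
Hypothesis vertex : is_vertex_conv_hull (ckflu_feasible d s k) x y.

Lemma assoc_bipartite : bipartite (assoc_edge x y).
Proof. by move=> [?|?] [?|?]. Qed.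

Lemma untight_bipartite : bipartite (untight_edge s x).
Proof. by move=> [?|?] [?|?]. Qed.

Lemma assoc_carries_flow : carries_flow (assoc_edge x y) x.
Proof.
move=> [a|b] [a'|b'] i j //= /andP[_ x_pos] /andP[/eqP ? /eqP ?]; by subst.
Qed.

Lemma untight_carries_flow : carries_flow (untight_edge s x) x.
Proof.
move=> [a|b] [a'|b'] i j //= /andP[x_pos _] /andP[/eqP ? /eqP ?]; by subst.
Qed.

(* Part (a): the alternating indicator of a cycle of [G] would be a feasible
   direction, yet it is 1 on the first edge, which the cycle uses only once. *)
Lemma vertex_acyclic : acyclic (assoc_edge x y).
Proof.
move=> [|a [|b [|r0 r]]] // c_uniq _; apply/negP => c_cycle.
have walk : path (assoc_edge x y) a [:: b, r0 & rcons r a] := c_cycle.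
have [i [j ab_ij]] := joins_exists (assoc_bipartite (andP walk).1).
have zero := vertex_rigid vertex
  (closed_walk_direction s assoc_bipartite assoc_carries_flow walk (last_rcons _ _ _)).
move: c_uniq => /= /andP[a_notin /andP[b_notin _]].
have off_edge v w : v \in r0 :: r -> ~~ joins v w i j.
  move=> v_in; apply/negP => /(joins_endpoint ab_ij)[v_a|v_b].
    by move: a_notin; rewrite -v_a in_cons v_in orbT.
  by move: b_notin; rewrite -v_b v_in.
have := zero i j; rewrite /= ab_ij joinsC (negbTE (off_edge _ _ (mem_head _ _))).
rewrite alt_walk_vanish ?belast_rcons //.
by rewrite !subr0 => /eqP; rewrite oner_eq0.
Qed.

(* Part (b): two distinct facilities with spare capacity that are connected in
   [H] would allow shifting load between them along the connecting walk. *)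
Lemma vertex_untight_slack_unique i1 i2 :
  \sum_j x i1 j < s%:R -> \sum_j x i2 j < s%:R ->
  connect (untight_edge s x) (inl i1) (inl i2) -> i1 = i2.
Proof.
move=> slack1 slack2 /connectP[p walk ends]; apply/eqP/contraT => i1_neq_i2.
have zero := vertex_rigid vertex (facility_walk_direction
  untight_bipartite untight_carries_flow walk (esym ends) slack1 slack2).
have := facility_walk_rowsum R i1 untight_bipartite walk (esym ends).
rewrite big1 => [|j _]; last exact: zero.
rewrite eqxx eq_sym (negbTE i1_neq_i2) subr0.
by move/eqP; rewrite eq_sym oner_eq0.
Qed.

End VertexStructure.

Section UntightCounting.
Variables (R : realFieldType) (F D : finType) (s : nat) (x : F -> D -> R).
Hypothesis x_ge0 : forall i j, 0 <= x i j.

Definition untight_facilities := [set i : F | untight_facility s x i].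
Definition untight_pairs := [set p : F * D | 0 < x p.1 p.2 < s%:R].
Definition full_facilities :=
  [set i in untight_facilities | \sum_j x i j == s%:R].
Definition untight_clients i := [set j : D | 0 < x i j < s%:R].

Lemma card_untight_pairs : #|untight_pairs| = (\sum_i #|untight_clients i|)%N.
Proof.
under [in RHS]eq_bigr do rewrite -sum1_card big_mkcond.
by rewrite pair_bigA -sum1_card big_mkcond; apply: eq_bigr => -[i j] _; rewrite !inE.
Qed.

Lemma untight_pairs_facility p :
  p \in untight_pairs -> p.1 \in untight_facilities.
Proof. by rewrite !inE => untight; apply/existsP; exists p.2. Qed.

Lemma full_facilitiesS : full_facilities \subset untight_facilities.
Proof. by apply/subsetP => i; rewrite inE => /andP[]. Qed.

(* A facility of [H] used to full capacity has at least two edges in [H]: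
   a single untight edge cannot carry the whole load [s]. *)
Lemma full_untight_clients i : i \in full_facilities -> (1 < #|untight_clients i|)%N.
Proof.
rewrite !inE => /andP[/existsP[j0 untight0] /eqP full].
have rest : \sum_(j | j != j0) x i j = s%:R - x i j0.
  by rewrite -full (bigD1 j0 isT) /=; ring.
have rest_neq0 : \sum_(j | j != j0) x i j != 0.
  by move: untight0 => /andP[_]; rewrite rest -subr_gt0 => /lt0r_neq0.
have [j1 /andP[j1_neq_j0 pos1]] : exists j1, (j1 != j0) && (0 < x i j1).
  by apply: psumr_neq0P (fun j _ => x_ge0 i j) _; apply/eqP.
have le1 : x i j1 <= s%:R - x i j0 by rewrite -rest (bigD1 j1) //= lerDl sumr_ge0.
apply/card_gt1P; exists j0, j1; rewrite !inE untight0 eq_sym j1_neq_j0 pos1.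
by move: untight0 => /andP[pos0 _]; split=> //; lra.
Qed.

Lemma untight_degree_bound :
  (#|untight_facilities| + #|full_facilities| <= #|untight_pairs|)%N.
Proof.
rewrite card_untight_pairs -!sum1_card.
rewrite [X in (X + _)%N]big_mkcond [X in (_ + X)%N]big_mkcond -big_split /=.
apply: leq_sum => i _.
have [i_full|i_notfull] := boolP (i \in full_facilities).
  by rewrite (subsetP full_facilitiesS _ i_full) full_untight_clients.
case: ifP => //; rewrite inE => /existsP[j0 untight0].
by rewrite addn0 card_gt0; apply/set0Pn; exists j0; rewrite inE.
Qed.

End UntightCounting.

(* The arithmetic of part (c): with [u] facilities and [e] edges in [H], [f]
   of the facilities full and [t] telling whether [i0] is one of them. *)
Lemma counting_arith (u f f' e m : nat) (t : bool) :
  f = (t + f')%N -> (u + f <= e)%N -> (e <= m + f')%N -> (f <= u)%N ->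
  (~~ t -> f < u)%N -> (0 < u)%N -> (u <= m)%N /\ (e <= (2 * m).-1)%N.
Proof.
move=> f_split degree rank f_le_u spare u_gt0; rewrite -subn1.
by case: t f_split spare => /= f_split; [|move/(_ isT)]; lia.
Qed.

Section UntightRank.
Variables (R : realFieldType) (F D : finType) (d : D -> nat) (s k : nat).
Variables (x : F -> D -> R) (y : F -> R).
Hypothesis vertex : is_vertex_conv_hull (ckflu_feasible d s k) x y.

Local Notation U := (untight_facilities s x).
Local Notation E := (untight_pairs s x).
Local Notation Full := (full_facilities s x).

(* A direction supported on [H] that preserves all demands and the loads of
   all full facilities but [i0] is feasible, provided [i0] has spare capacity
   or all facilities of [H] are full (then the load of [i0] is forced too). *)
Lemma restricted_direction i0 (w : F -> D -> R) :
  (i0 \in Full -> U \subset Full) ->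
  (forall i j, (i, j) \notin E -> w i j = 0) ->
  (forall j, \sum_i w i j = 0) ->
  (forall i, i \in Full :\ i0 -> \sum_j w i j = 0) ->
  feasible_direction s x w.
Proof.
move=> i0_choice w_supp w_col w_row.
have xy_feas := vertex_feasible vertex.
have outside_zero i : i \notin U -> \sum_j w i j = 0.
  move=> i_notU; apply: big1 => j _; apply: w_supp.
  by apply: contra i_notU => /untight_pairs_facility.
split=> // [i j w_neq0|i row_neq0].
  case: (boolP ((i, j) \in E)) => [|/w_supp w0]; first by rewrite inE => /andP[].
  by rewrite w0 eqxx in w_neq0.
rewrite lt_neqAle (feasible_load_le _ xy_feas) andbT; apply/eqP => full.
have i_U : i \in U by apply: contraR row_neq0 => /outside_zero ->.
have i_full : i \in Full by rewrite inE i_U full eqxx.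
have i_i0 : i = i0.
  by apply/eqP; apply: contraR row_neq0 => i_neq_i0; rewrite w_row // in_setD1 i_neq_i0.
subst i; have U_full := i0_choice i_full.
have others_zero i : i != i0 -> \sum_j w i j = 0.
  move=> i_neq_i0; have [i_U'|/outside_zero //] := boolP (i \in U).
  by rewrite w_row // in_setD1 i_neq_i0 (subsetP U_full).
have : \sum_i \sum_j w i j = 0 by rewrite exchange_big big1.
rewrite (bigD1 i0) //= [X in _ + X]big1 ?addr0 => [row0|]; last exact: others_zero.
by rewrite row0 eqxx in row_neq0.
Qed.

(* Dimension count: the vectors supported on [E] are determined by the
   [#|D|] client demands and the loads of the full facilities other than [i0]. *)
Lemma untight_pairs_rank_bound i0 :
  (i0 \in Full -> U \subset Full) -> (#|E| <= #|D| + #|Full :\ i0|)%N.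
Proof.
move=> i0_choice.
pose C := [set b : D + F | if b is inr i then i \in Full :\ i0 else true].
pose K (p : F * D) (b : D + F) : R :=
  match b with inl j => (p.2 == j)%:R | inr i => (p.1 == i)%:R end.
have -> : (#|D| + #|Full :\ i0|)%N = #|C|.
  rewrite -!sum1_card [RHS]big_mkcond big_sumType /=.
  by congr (_ + _)%N; rewrite big_mkcond; apply: eq_bigr => ? _; rewrite !inE.
apply: (card_le_functionals (K := K)) => z z_supp z_ann.
have col j : \sum_i z (i, j) = 0.
  by rewrite -sum_pairs_col; apply: (z_ann (inl j)); rewrite inE.
have row i : i \in Full :\ i0 -> \sum_j z (i, j) = 0.
  by move=> i_in; rewrite -sum_pairs_row; apply: (z_ann (inr i)); rewrite inE.
have zero := vertex_rigid vertex
  (restricted_direction i0_choice (fun i j => z_supp (i, j)) col row).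
by move=> [i j]; apply: zero.
Qed.

(* Part (c): combine the degree bound [#|U| + #|Full| <= #|E|] with the rank
   bound for a well-chosen [i0]: a facility of [H] with spare capacity if
   there is one, and any facility of [H] otherwise. *)
Lemma vertex_untight_counts :
  (#|U| <= #|D|)%N /\ (#|E| <= (2 * #|D|).-1)%N.
Proof.
have [x_ge0 _ _ _ _] := vertex_feasible vertex.
have degree := untight_degree_bound s x_ge0.
have [U0|[i1 i1_U]] := set_0Vmem U.
  suff -> : E = set0 by rewrite U0 !cards0.
  by apply/eqP; rewrite -subset0; apply/subsetP => p /untight_pairs_facility; rewrite U0 inE.
have [i0 [i0_U i0_choice]] : exists i0, i0 \in U /\ (i0 \in Full -> U \subset Full).
  case: (boolP [exists i in U, i \notin Full]) => [/existsP[i /andP[i_U i_spare]]|].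
    by exists i; split=> // i_full; rewrite i_full in i_spare.
  move=> /existsPn all_full; exists i1; split=> // _; apply/subsetP => i i_U.
  by have := all_full i; rewrite i_U negbK.
have rank := untight_pairs_rank_bound i0_choice.
have full_le := subset_leq_card (full_facilitiesS s x).
have split_i0 := cardsD1 i0 Full.
have spare : i0 \notin Full -> (#|Full| < #|U|)%N.
  move=> i0_notfull; apply: proper_card; apply/properP; split; last by exists i0.
  exact: full_facilitiesS.
have U_pos : (0 < #|U|)%N by apply/card_gt0P; exists i0.
exact: counting_arith split_i0 degree rank full_le spare U_pos.
Qed.

End UntightRank.

Theorem mainTheorem7 (R : realFieldType) (F D : finType)
    (f : F -> R) (d : D -> nat) (c : F -> D -> R) (s k : nat)
    (hf : forall i, 0 <= f i) (hc : forall i j, 0 <= c i j)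
    (hs : (0 < s)%N) (hk : (1 <= k)%N)
    (x : F -> D -> R) (y : F -> R) :
  is_vertex_conv_hull (ckflu_feasible d s k) x y ->
  [/\ acyclic (assoc_edge x y),
      (forall i1 i2 : F,
         untight_facility s x i1 -> untight_facility s x i2 ->
         0 < \sum_(j : D) x i1 j < s%:R -> 0 < \sum_(j : D) x i2 j < s%:R ->
         connect (untight_edge s x) (inl i1) (inl i2) -> i1 = i2),
      leq #|[set i : F | untight_facility s x i]| #|D|
    & leq #|[set p : F * D | 0 < x p.1 p.2 < s%:R]| (2 * #|D|)%N.-1].
Proof.
move=> vertex; have [facilities_le pairs_le] := vertex_untight_counts vertex.
split=> // [|i1 i2 _ _ /andP[_ slack1] /andP[_ slack2]].
  exact: vertex_acyclic vertex.
exact: (vertex_untight_slack_unique vertex slack1 slack2).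
Qed.
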